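(* Let $\mathcal{C}=\mathsf{CSS}(A,B)$ be an $[\![n,k,d]\!]$ qudit CSS code with $d\geq 3$. The number of distinct logical operations that can be implemented by permutations of the physical qudits that preserve the codespace is at most $\frac{n!}{k_{\max}!}$, where $k_{\max}=\max\{\dim A,\dim B\}$.
   Context: Let $q$ be a prime power. $A,B\subseteq\mathbb{F}_q^n$ are classical codes with parity-check matrices $H_A,H_B$ (of full row rank) satisfying $H_AH_B^T=0$; $\mathsf{CSS}(A,B)$ is the qudit stabilizer code whose $X$-type stabilizers are the generalized Paulis $X^{v}$ for $v$ in the row space of $H_A$ and whose $Z$-type stabilizers are $Z^{w}$ for $w$ in the row space of $H_B$. It has $n$ physical qudits, $k=\dim A+\dim B-n$ logical qudits, and distance $d$. A permutation of the physical qudits preserving the codespace is a logical operator; two such are counted as the same logical operation if they act identically on the codespace. *)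

From HB Require Import structures.
From mathcomp Require Import all_boot all_order all_algebra all_fingroup all_field.
Set Implicit Arguments. Unset Strict Implicit. Unset Printing Implicit Defensive.
Import GRing.Theory Num.Theory.
Local Open Scope ring_scope.

(* Hilbert space of n qudits: C^(F^n), computational basis indexed by 'rV[F]_n. *)
Definition state (F : finFieldType) (n : nat) := {ffun 'rV[F]_n -> algC}.

Definition dotv (F : finFieldType) (n : nat) (u x : 'rV[F]_n) : F := (u *m x^T) 0 0.

(* Nontrivial additive character chi : (F,+) -> C^x  (e.g. chi a = omega^(tr a)). *)
Definition is_nontriv_add_char (F : finFieldType) (chi : F -> algC) : Prop :=
  chi 0 = 1 /\ (forall a b, chi (a + b) = chi a * chi b) /\ exists a, chi a != 1.

(* Generalized Paulis: X^v |x> = |x + v>,  Z^w |x> = chi(w.x) |x>. *)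
Definition Xop (F : finFieldType) (n : nat) (v : 'rV[F]_n) (psi : state F n) : state F n :=
  [ffun x => psi (x - v)].
Definition Zop (F : finFieldType) (n : nat) (chi : F -> algC) (w : 'rV[F]_n)
  (psi : state F n) : state F n :=
  [ffun x => chi (dotv w x) * psi x].

(* Permutation of the physical qudits: sends |x> to |x o s^-1>. *)
Definition Pop (F : finFieldType) (n : nat) (s : 'S_n) (psi : state F n) : state F n :=
  [ffun x => psi (col_perm s x)].

Definition in_code (F : finFieldType) (n mA mB : nat) (chi : F -> algC)
  (HA : 'M[F]_(mA, n)) (HB : 'M[F]_(mB, n)) (psi : state F n) : Prop :=
  (forall v : 'rV[F]_n, (v <= HA)%MS -> Xop v psi = psi) /\
  (forall w : 'rV[F]_n, (w <= HB)%MS -> Zop chi w psi = psi).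

Definition preserves_code (F : finFieldType) (n mA mB : nat) (chi : F -> algC)
  (HA : 'M[F]_(mA, n)) (HB : 'M[F]_(mB, n)) (s : 'S_n) : Prop :=
  forall psi, in_code chi HA HB psi -> in_code chi HA HB (Pop s psi).

Definition same_logical (F : finFieldType) (n mA mB : nat) (chi : F -> algC)
  (HA : 'M[F]_(mA, n)) (HB : 'M[F]_(mB, n)) (s t : 'S_n) : Prop :=
  forall psi, in_code chi HA HB psi -> Pop s psi = Pop t psi.

Definition in_ker (F : finFieldType) (m n : nat) (H : 'M[F]_(m, n)) (v : 'rV[F]_n) : Prop :=
  v *m H^T = 0.
Definition code_dim (F : finFieldType) (m n : nat) (H : 'M[F]_(m, n)) : nat :=
  \rank (kermx H^T).

Definition pauli_wt (F : finFieldType) (n : nat) (v w : 'rV[F]_n) : nat :=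
  #|[set i : 'I_n | (v 0 i != 0) || (w 0 i != 0)]|.

(* distance >= d: every nontrivial logical Pauli X^v Z^w (v in B, w in A,
   i.e. commuting with all stabilizers, but (v,w) not in rowspace HA x rowspace HB)
   has weight >= d. *)
Definition css_distance_ge (F : finFieldType) (n mA mB : nat)
  (HA : 'M[F]_(mA, n)) (HB : 'M[F]_(mB, n)) (d : nat) : Prop :=
  forall v w : 'rV[F]_n, in_ker HB v -> in_ker HA w ->
    ~~ ((v <= HA)%MS && (w <= HB)%MS) -> (d <= pauli_wt v w)%N.

From HB Require Import structures.
From mathcomp Require Import all_boot all_order all_algebra all_fingroup all_field.
Import GRing.Theory Num.Theory.
Local Open Scope ring_scope.

(* A permutation s preserving the code maps the row space of HA (the
   X-stabilizers) into itself, and s^-1 maps B = ker HB into itself because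
   codewords are supported on B; by orthogonality s^-1 also stabilizes the row
   space of HB.  If HA has full row rank mA, pick an information set of mA
   columns of HA.  Two such permutations s, t that agree on it send every
   column j of HA to equal columns, col (s j) HA = col (t j) HA, so
   e_(s j) - e_(t j) is a Z-logical of weight at most 2; distance 3 makes it a
   Z-stabilizer, and then s and t act identically on every codeword.  Hence
   the logical action is determined by an injection of mA points into n
   points, giving at most n!/(n - mA)! = n!/(dim A)! logical operations.
   The same argument with HB, s^-1 and X-stabilizers gives n!/(dim B)!. *)

Set Implicit Arguments.
Unset Strict Implicit.

Section RowSpaces.
Variable F : fieldType.

Lemma addmx_subr m1 m2 n (A B : 'M[F]_(m1, n)) (C : 'M_(m2, n)) :
  (B <= C)%MS -> ((A + B)%R <= C)%MS = (A <= C)%MS.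
Proof.
move=> BC; apply/idP/idP => [ABC | AC]; last by rewrite addmx_sub.
by rewrite -(addrK B A) addmx_sub // eqmx_opp.
Qed.

Definition information_set m n (H : 'M[F]_(m, n)) (f : 'I_m -> 'I_n) :=
  forall p (Y : 'M_(p, n)), (Y <= H)%MS -> colsub f Y = 0 -> Y = 0.

Lemma row_free_information_set m n (H : 'M[F]_(m, n)) : row_free H ->
  exists2 f : 'I_m -> 'I_n, injective f & information_set H f.
Proof.
move=> freeH; have fullHt : row_full H^T by rewrite /row_full mxrank_tr.
exists (fullrankfun fullHt); first exact: fullrankfun_inj.
move=> p Y /submxP[D ->]; rewrite -mulmx_colsub => DH0.
have unitH : colsub (fullrankfun fullHt) H \in unitmx.
  by rewrite -unitmx_tr trmx_mxsub fullrowsub_unit.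
by rewrite -[D](mulmxK unitH) DH0 !mul0mx.
Qed.

Lemma col_perm_eq_on_information_set m n (H : 'M[F]_(m, n)) (f : 'I_m -> 'I_n)
    (s t : 'S_n) :
  information_set H f -> (col_perm s H <= H)%MS -> (col_perm t H <= H)%MS ->
  (forall i, s (f i) = t (f i)) -> col_perm s H = col_perm t H.
Proof.
move=> infoH sH tH stf; apply/eqP; rewrite -subr_eq0; apply/eqP/infoH.
  by rewrite addmx_sub // eqmx_opp.
by apply/matrixP => r i; rewrite !mxE stf subrr.
Qed.

Lemma sub_of_mul_trker m n p (H : 'M[F]_(m, n)) (Y : 'M_(p, n)) :
  Y *m (kermx H^T)^T = 0 -> (Y <= H)%MS.
Proof.
set K := kermx H^T => YK0.
have HK0 : (H <= kermx K^T)%MS.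
  by rewrite sub_kermx -[H]trmxK -trmx_mul mulmx_ker trmx0.
have rankKK : \rank (kermx K^T) = \rank H.
  by rewrite !(mxrank_ker, mxrank_tr) subKn // rank_leq_col.
have: (Y <= kermx K^T)%MS by rewrite sub_kermx YK0.
by move/submx_trans; apply; rewrite -(mxrank_leqif_sup HK0) rankKK.
Qed.

Lemma col_perm_sub_of_ker m n (H : 'M[F]_(m, n)) (s : 'S_n) :
  (col_perm s (kermx H^T) <= kermx H^T)%MS -> (col_perm s H <= H)%MS.
Proof.
rewrite !col_permE; set K := kermx H^T => sK.
have KsK : (K <= K *m perm_mx s^-1)%MS.
  by rewrite -(mxrank_leqif_sup sK) mxrankMfree ?row_free_unit ?unitmx_perm.
have /submxP[D KsE] : (K *m perm_mx s <= K)%MS.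
  have := submxMr (perm_mx s) KsK.
  by rewrite -mulmxA -perm_mxM mulVg perm_mx1 mulmx1.
have HK0 : H *m K^T = 0 by rewrite -[H]trmxK -trmx_mul mulmx_ker trmx0.
apply: sub_of_mul_trker; rewrite -/K -mulmxA.
have -> : perm_mx s^-1 *m K^T = (D *m K)^T.
  by rewrite -KsE [(K *m _)^T]trmx_mul tr_perm_mx.
by rewrite trmx_mul mulmxA HK0 mul0mx.
Qed.

Lemma perm_mxB_mul_tr_eq0 m n (H : 'M[F]_(m, n)) (s t : 'S_n) :
  col_perm s H = col_perm t H -> (perm_mx s - perm_mx t) *m H^T = 0.
Proof.
move=> /(congr1 trmx); rewrite !col_permE !trmx_mul !tr_perm_mx !invgK => eq_st.
by rewrite mulmxBl eq_st subrr.
Qed.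

Lemma row_perm_mxB n (s t : 'S_n) j :
  row j (perm_mx s - perm_mx t) = delta_mx 0 (s j) - delta_mx 0 (t j) :> 'rV[F]_n.
Proof. by rewrite linearB /= /perm_mx !row_permEsub !row_rowsub !row1. Qed.

End RowSpaces.

Section Paulis.
Variable F : finFieldType.

Lemma dotv_eq0 m n (H : 'M[F]_(m, n)) (w x : 'rV[F]_n) :
  (w <= H)%MS -> x *m H^T = 0 -> dotv w x = 0.
Proof.
move=> /submxP[u ->] xH0; rewrite /dotv -mulmxA -[H]trmxK -trmx_mul xH0.
by rewrite trmx0 mulmx0 mxE.
Qed.

Lemma pauli_wtC n (v w : 'rV[F]_n) : pauli_wt v w = pauli_wt w v.
Proof. by apply: eq_card => i; rewrite !inE orbC. Qed.

Lemma pauli_wt_delta_mxB n (a b : 'I_n) :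
  (pauli_wt (delta_mx 0 a - delta_mx 0 b : 'rV[F]_n)%R 0%R <= 2)%N.
Proof.
apply: (@leq_trans #|[set a; b]|); last by rewrite cards2; case: (a != b).
apply/subset_leq_card/subsetP => i; rewrite !inE !mxE !eqxx /= orbF.
by case: (i == a); case: (i == b); rewrite //= subrr eqxx.
Qed.

Lemma perm_mxB_sub m p n (H : 'M[F]_(m, n)) (G : 'M[F]_(p, n)) (s t : 'S_n) :
  (forall v, v *m H^T = 0 -> (pauli_wt v 0%R <= 2)%N -> (v <= G)%MS) ->
  (perm_mx s - perm_mx t) *m H^T = 0 -> (perm_mx s - perm_mx t <= G)%MS.
Proof.
move=> lowG stH0; apply/row_subP => j; apply: lowG.
  by rewrite -row_mul stH0 row0.
by rewrite row_perm_mxB pauli_wt_delta_mxB.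
Qed.

End Paulis.

Lemma card_le_ffact_of_determined_on m n (S : {set 'S_n}) (r : 'S_n -> 'S_n)
    (f : 'I_m -> 'I_n) :
  injective f -> {in S &, forall s t, (forall i, r s (f i) = r t (f i)) -> s = t} ->
  (#|S| <= n ^_ m)%N.
Proof.
move=> injf detS; pose h s := [ffun i => r s (f i)].
have injh : {in S &, injective h}.
  by move=> s t sS tS /ffunP hst; apply: detS => // i; have := hst i; rewrite !ffunE.
rewrite -(card_in_imset injh) -[n in n ^_ _]card_ord -[m in _ ^_ m]card_ord.
rewrite -card_inj_ffuns; apply/subset_leq_card/subsetP => _ /imsetP[s _ ->].
by rewrite inE; apply/injectiveP => i j; rewrite !ffunE => /perm_inj/injf.
Qed.

Section CSSCode.
Variables (F : finFieldType) (n mA mB : nat).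
Variables (HA : 'M[F]_(mA, n)) (HB : 'M[F]_(mB, n)) (chi : F -> algC).
Hypotheses (HAB : HA *m HB^T = 0) (chiP : is_nontriv_add_char chi).

Lemma in_code_support psi x :
  in_code chi HA HB psi -> psi x != 0 -> x *m HB^T = 0.
Proof.
have [_ [_ [a chia]]] := chiP; move=> [_ Zpsi] psix0.
apply/rowP => i; rewrite [RHS]mxE; apply/eqP/negPn/negP => xi0.
set c := (x *m HB^T) 0 i in xi0.
pose w := (a / c) *: row i HB.
have dotw : dotv w x = a.
  rewrite /dotv -scalemxAl mxE -row_mul mxE.
  have -> : (HB *m x^T) i 0 = c by rewrite /c -[HB in LHS]trmxK -trmx_mul mxE.
  by rewrite mulfVK.
have := congr1 (fun phi : state F n => phi x) (Zpsi w (scalemx_sub _ (row_sub i HB))).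
rewrite ffunE dotw => /eqP; rewrite -subr_eq0 -{2}(mul1r (psi x)) -mulrBl.
by rewrite mulf_eq0 subr_eq0 (negPf chia) (negPf psix0).
Qed.

Definition coset_state (x0 : 'rV[F]_n) : state F n :=
  [ffun y => if (y - x0 <= HA)%MS then 1 else 0].

Lemma coset_state_in_code x0 :
  x0 *m HB^T = 0 -> in_code chi HA HB (coset_state x0).
Proof.
have [chi0 _] := chiP; move=> x0B; split => [v vA | w wB]; apply/ffunP => y.
  by rewrite !ffunE addrAC addmx_subr // eqmx_opp.
rewrite !ffunE; case: ifP => [/submxP[D yx0E] | _]; last by rewrite mulr0.
have yB : y *m HB^T = 0.
  by rewrite -(subrK x0 y) mulmxDl yx0E -mulmxA HAB mulmx0 x0B addr0.
by rewrite (dotv_eq0 wB yB) chi0 mulr1.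
Qed.

Lemma preserves_code_stabX s :
  preserves_code chi HA HB s -> (col_perm s HA <= HA)%MS.
Proof.
move=> pres_s; have [Xpsi _] := pres_s _ (coset_state_in_code (mul0mx _ HB^T)).
rewrite col_permE; apply/row_subP => i; rewrite row_mul -col_permE.
have := congr1 (fun phi : state F n => phi (row i HA)) (Xpsi _ (row_sub i HA)).
rewrite !ffunE subrr linear0 !subr0 sub0mx.
by case: ifP => // _ /eqP; rewrite oner_eq0.
Qed.

Lemma preserves_code_kerZ s :
  preserves_code chi HA HB s -> (col_perm s^-1 (kermx HB^T) <= kermx HB^T)%MS.
Proof.
move=> pres_s; rewrite col_permE; apply/row_subP => i; rewrite row_mul -col_permE.
have /sub_kermxP xB := row_sub i (kermx HB^T).
apply/sub_kermxP/(in_code_support (pres_s _ (coset_state_in_code xB))).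
by rewrite !ffunE -col_permM mulgV col_perm1 subrr sub0mx oner_eq0.
Qed.

Lemma preserves_code_stabZ s :
  preserves_code chi HA HB s -> (col_perm s^-1 HB <= HB)%MS.
Proof. by move/preserves_code_kerZ/col_perm_sub_of_ker. Qed.

Lemma same_logical_of_Z s t :
  preserves_code chi HA HB s -> preserves_code chi HA HB t ->
  (perm_mx s - perm_mx t <= HB)%MS -> same_logical chi HA HB s t.
Proof.
move=> pres_s pres_t /submxP[D stE] psi psiC; apply/ffunP => x.
have [xB | xNB] := eqVneq (x *m HB^T) 0.
  have stE' : perm_mx s^-1 - perm_mx t^-1 = (D *m HB)^T.
    by rewrite -stE linearB /= !tr_perm_mx.
  rewrite !ffunE; apply: congr1; apply/eqP; rewrite -subr_eq0 !col_permE -mulmxBr.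
  by rewrite stE' trmx_mul mulmxA xB mul0mx.
have vanish phi : in_code chi HA HB phi -> phi x = 0.
  by move=> phiC; apply: contraNeq xNB => /(in_code_support phiC)->.
by rewrite (vanish _ (pres_s _ psiC)) (vanish _ (pres_t _ psiC)).
Qed.

Lemma same_logical_of_X s t :
  (perm_mx s^-1 - perm_mx t^-1 <= HA)%MS -> same_logical chi HA HB s t.
Proof.
move=> stA psi [Xpsi _]; apply/ffunP => x.
have stxA : (col_perm s x - col_perm t x <= HA)%MS.
  by rewrite !col_permE -mulmxBr (submx_trans (submxMl _ _) stA).
have := congr1 (fun phi : state F n => phi (col_perm s x)) (Xpsi _ stxA).
by rewrite !ffunE opprB addrC subrK.
Qed.

Hypothesis dist3 : css_distance_ge HA HB 3.

Lemma low_weight_kerA_sub v :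
  v *m HA^T = 0 -> (pauli_wt v 0%R <= 2)%N -> (v <= HB)%MS.
Proof.
move=> vA wt_v; apply/negPn/negP => vNB.
have := dist3 (mul0mx _ HB^T) vA; rewrite sub0mx (negbTE vNB) pauli_wtC.
by move=> /(_ isT)/leq_trans/(_ wt_v).
Qed.

Lemma low_weight_kerB_sub v :
  v *m HB^T = 0 -> (pauli_wt v 0%R <= 2)%N -> (v <= HA)%MS.
Proof.
move=> vB wt_v; apply/negPn/negP => vNA.
have := dist3 vB (mul0mx _ HA^T); rewrite (negbTE vNA).
by move=> /(_ isT)/leq_trans/(_ wt_v).
Qed.

Lemma same_logical_of_agree_X f s t : information_set HA f ->
  preserves_code chi HA HB s -> preserves_code chi HA HB t ->
  (forall i, s (f i) = t (f i)) -> same_logical chi HA HB s t.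
Proof.
move=> infoA pres_s pres_t stf; apply: same_logical_of_Z => //.
apply: (perm_mxB_sub low_weight_kerA_sub); apply: perm_mxB_mul_tr_eq0.
by apply: col_perm_eq_on_information_set infoA _ _ stf; apply: preserves_code_stabX.
Qed.

Lemma same_logical_of_agree_Z f s t : information_set HB f ->
  preserves_code chi HA HB s -> preserves_code chi HA HB t ->
  (forall i, (s^-1)%g (f i) = (t^-1)%g (f i)) -> same_logical chi HA HB s t.
Proof.
move=> infoB pres_s pres_t stf; apply: same_logical_of_X.
apply: (perm_mxB_sub low_weight_kerB_sub); apply: perm_mxB_mul_tr_eq0.
by apply: col_perm_eq_on_information_set infoB _ _ stf; apply: preserves_code_stabZ.
Qed.

Section LogicalPermutations.
Variable S : {set 'S_n}.
Hypothesis presS : forall s, s \in S -> preserves_code chi HA HB s.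
Hypothesis logical_injS :
  forall s t, s \in S -> t \in S -> same_logical chi HA HB s t -> s = t.

Lemma card_logical_perms_le_X : row_free HA -> (#|S| <= n ^_ mA)%N.
Proof.
move=> /row_free_information_set[f injf infoA].
apply: (card_le_ffact_of_determined_on (r := id) injf) => s t sS tS stf.
exact: logical_injS (same_logical_of_agree_X infoA (presS sS) (presS tS) stf).
Qed.

Lemma card_logical_perms_le_Z : row_free HB -> (#|S| <= n ^_ mB)%N.
Proof.
move=> /row_free_information_set[f injf infoB].
apply: (card_le_ffact_of_determined_on (r := fun s => (s^-1)%g) injf).
move=> s t sS tS stf.
exact: logical_injS (same_logical_of_agree_Z infoB (presS sS) (presS tS) stf).
Qed.

End LogicalPermutations.
End CSSCode.

Unset Implicit Arguments.

Theorem theorem2 (F : finFieldType) (n mA mB : nat)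
  (HA : 'M[F]_(mA, n)) (HB : 'M[F]_(mB, n)) (chi : F -> algC) :
  row_free HA -> row_free HB -> HA *m HB^T = 0 ->
  is_nontriv_add_char chi ->
  css_distance_ge HA HB 3 ->
  forall S : {set 'S_n},
    (forall s, s \in S -> preserves_code chi HA HB s) ->
    (forall s t, s \in S -> t \in S -> same_logical chi HA HB s t -> s = t) ->
    (#|S| <= n`! %/ (maxn (code_dim HA) (code_dim HB))`!)%N.
Proof.
move=> freeA freeB HAB chiP dist3 S presS logical_injS.
have mA_le_n : (mA <= n)%N by rewrite -(eqP freeA) rank_leq_col.
have mB_le_n : (mB <= n)%N by rewrite -(eqP freeB) rank_leq_col.
rewrite /code_dim !mxrank_ker !mxrank_tr (eqP freeA) (eqP freeB).
have [_ | _] := leqP (n - mB) (n - mA).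
  rewrite -ffact_factd //.
  exact: card_logical_perms_le_X HAB chiP dist3 S presS logical_injS freeA.
rewrite -ffact_factd //.
exact: card_logical_perms_le_Z HAB chiP dist3 S presS logical_injS freeB.
Qed.
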